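(* Let $X$ be a complex Banach space, $\mathcal{F}$ a commutative algebra with unit, and $\Phi:\mathcal{F}\to\mathcal{C}(X)$ a proto-calculus. (a) If $(e_n)_n$ is a (weak) approximate identity for $f\in\mathcal{F}$ and for $g\in\mathcal{F}$, then it is a (weak) approximate identity for $f+g$ and for $\lambda f$ ($\lambda\in\mathbb{C}$), and $\overline{\Phi(f)+\Phi(g)}=\Phi(f+g)$. (b) If $(e_n)_n$ is a (strong) approximate identity for $f,g\in\mathcal{F}$, then $(e_n^2)_n$ is a strong approximate identity for $fg$, and $\overline{\Phi(f)\Phi(g)}=\Phi(fg)$.
   Context: $\mathcal{L}(X)$, $\mathcal{C}(X)$: bounded, resp. closed linear operators on $X$; operator inclusions are graph inclusions, sums/products have natural domains; $\overline{T}$ is the closure of a closable operator. A proto-calculus is a map $\Phi:\mathcal{F}\to\mathcal{C}(X)$ with (FC1) $\Phi(\mathbf{1})=I$; (FC2) $\lambda\Phi(f)\subseteq\Phi(\lambda f)$, $\Phi(f)+\Phi(g)\subseteq\Phi(f+g)$; (FC3) $\Phi(f)\Phi(g)\subseteq\Phi(fg)$, $\mathrm{dom}(\Phi(f)\Phi(g))=\mathrm{dom}(\Phi(g))\cap\mathrm{dom}(\Phi(fg))$. A sequence $(e_n)_n$ in $\mathcal{F}$ with $\Phi(e_n)\in\mathcal{L}(X)$ for all $n$ is a (strong) approximate identity if $\Phi(e_n)\to I$ strongly, and a weak approximate identity if $\Phi(e_n)\to I$ weakly. It is a (weak) approximate identity for $f\in\mathcal{F}$ if moreover $\Phi(e_n)\Phi(f)\subseteq\Phi(f)\Phi(e_n)=\Phi(fe_n)\in\mathcal{L}(X)$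 for all $n\in\mathbb{N}$. *)

From mathcomp Require Import all_boot all_algebra.
From mathcomp Require Export complex.
From mathcomp Require Export all_classical all_reals all_analysis.
Export numFieldNormedType.Exports.
Set Implicit Arguments. Unset Strict Implicit. Unset Printing Implicit Defensive.
Import GRing.Theory Num.Theory.
Local Open Scope ring_scope.
Local Open Scope classical_set_scope.

(* (Possibly unbounded) operators on X are represented by their graphs,
   i.e. relations T x y  <->  (x, y) is in the graph of T. *)
Definition op (X : Type) := X -> X -> Prop.

Section Operators.
Context {K : numFieldType} {X : normedModType K}.

Definition opdom (T : op X) : set X := [set x | exists y, T x y].

Definition is_linop (T : op X) : Prop :=
  T 0 0 /\
  (forall (a : K) x1 y1 x2 y2, T x1 y1 -> T x2 y2 -> T (a *: x1 + x2) (a *: y1 + y2)) /\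
  (forall y, T 0 y -> y = 0).

Definition graph (T : op X) : set (X * X) := [set p | T p.1 p.2].

Definition is_closed_op (T : op X) : Prop := is_linop T /\ closed (graph T).

Definition is_bounded_op (T : op X) : Prop :=
  is_linop T /\ (forall x, exists y, T x y) /\
  exists M : K, forall x y, T x y -> `|y| <= M * `|x|.

Definition opI : op X := fun x y => y = x.
Definition opsub (S T : op X) : Prop := forall x y, S x y -> T x y.
Definition opeq (S T : op X) : Prop := forall x y, S x y <-> T x y.
Definition opadd (S T : op X) : op X :=
  fun x z => exists y1 y2, S x y1 /\ T x y2 /\ z = y1 + y2.
Definition opscale (a : K) (T : op X) : op X :=
  fun x z => exists y, T x y /\ z = a *: y.
Definition opmul (S T : op X) : op X :=
  fun x z => exists y, T x y /\ S y z.
Definition opclosure (T : op X) : op X :=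
  fun x y => closure (graph T) (x, y).

Definition strong_to_I (A : nat -> op X) : Prop :=
  forall (x : X) (y : nat -> X), (forall n, A n x (y n)) -> y @ \oo --> x.

Definition weak_to_I (A : nat -> op X) : Prop :=
  forall (phi : {linear X -> K^o}), continuous (phi : X -> K^o) ->
  forall (x : X) (y : nat -> X), (forall n, A n x (y n)) ->
    (fun n => phi (y n)) @ \oo --> phi x.

End Operators.

Section Calculus.
Context {K : numFieldType} {X : normedModType K} {F : comAlgType K}.

Definition proto_calculus (Phi : F -> op X) : Prop :=
  (forall f, is_closed_op (Phi f)) /\
  opeq (Phi 1) opI /\
  (forall (a : K) f, opsub (opscale a (Phi f)) (Phi (a *: f))) /\
            (forall f g, opsub (opadd (Phi f) (Phi g)) (Phi (f + g))) /\
  (forall f g, opsub (opmul (Phi f) (Phi g)) (Phi (f * g)) /\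
               opdom (opmul (Phi f) (Phi g)) = opdom (Phi g) `&` opdom (Phi (f * g))).

Definition approx_identity (Phi : F -> op X) (e : nat -> F) : Prop :=
  (forall n, is_bounded_op (Phi (e n))) /\ strong_to_I (fun n => Phi (e n)).

Definition weak_approx_identity (Phi : F -> op X) (e : nat -> F) : Prop :=
  (forall n, is_bounded_op (Phi (e n))) /\ weak_to_I (fun n => Phi (e n)).

Definition ai_for_cond (Phi : F -> op X) (e : nat -> F) (f : F) : Prop :=
  forall n, opsub (opmul (Phi (e n)) (Phi f)) (opmul (Phi f) (Phi (e n))) /\
            opeq (opmul (Phi f) (Phi (e n))) (Phi (f * e n)) /\
            is_bounded_op (Phi (f * e n)).

Definition approx_identity_for (Phi : F -> op X) (e : nat -> F) (f : F) : Prop :=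
  approx_identity Phi e /\ ai_for_cond Phi e f.

Definition weak_approx_identity_for (Phi : F -> op X) (e : nat -> F) (f : F) : Prop :=
  weak_approx_identity Phi e /\ ai_for_cond Phi e f.

End Calculus.

From HB Require Import structures.
From mathcomp Require Import all_boot all_order all_algebra.
From mathcomp Require Import complex.
From mathcomp Require Import all_classical all_reals all_analysis.
From mathcomp Require Import ring lra.
Import Order.TTheory GRing.Theory Num.Theory.
Local Open Scope ring_scope.
Local Open Scope classical_set_scope.
Local Open Scope complex_scope.

Set Implicit Arguments.
Unset Strict Implicit.
Unset Printing Implicit Defensive.

(* Call [Phi (h * e n)] factored when it is [Phi h] composed with
   [Phi (e n)], as FC3 and the commutation [Phi (e n) Phi h <= Phi h Phi (e n)]
   force for an approximate identity for [h]. Factorisations add, scale and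
   (squaring [e n]) multiply, which gives the approximate-identity claims; the
   operators [Phi ((f + g) * e n)] etc. are bounded because they contain sums
   and products of bounded everywhere-defined operators. For the closures,
   [Phi (e n)] maps the graph of [Phi h] into the graph of [S = Phi f + Phi g]
   (resp. [Phi f Phi g]), so every point of the graph of [Phi h] is a (weak)
   limit of points of the graph of [S]; by Hahn-Banach, weak limits of points
   of a subspace lie in its norm closure. Finally [Phi (e n) ^ 2 -> I] strongly
   because the [Phi (e n)] are uniformly bounded (Banach-Steinhaus). Both
   theorems are applied to X viewed as a real Banach space. *)

Section OperatorFacts.
Context {K : numFieldType} {X : normedModType K}.
Implicit Types (S T : op X) (A B : nat -> op X).

Definition op_bound T (M : K) := forall x y, T x y -> `|y| <= M * `|x|.

Lemma opeqE S T : opeq S T -> S = T.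
Proof. by move=> ST; apply/funext => x; apply/funext => y; apply/propext. Qed.

Lemma linop_fun T x y1 y2 : is_linop T -> T x y1 -> T x y2 -> y1 = y2.
Proof.
move=> [_ [Tlin T0]] Ty1 Ty2; apply/eqP; rewrite -subr_eq0; apply/eqP; apply: T0.
by have := Tlin (-1) _ _ _ _ Ty2 Ty1; rewrite !scaleN1r addNr addrC.
Qed.

Definition opfun T (x : X) : X := xget 0 (T x).

Lemma opfunP T x : is_bounded_op T -> T x (opfun T x).
Proof. by case=> _ [/(_ x) Tx _]; exact: xgetPex. Qed.

Lemma opfun_eq T x y : is_linop T -> T x y -> opfun T x = y.
Proof. by move=> Tlin Txy; apply: linop_fun Tlin (xgetI 0 Txy) Txy. Qed.

Lemma opfun_linear T : is_bounded_op T -> linear (opfun T).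
Proof.
move=> Tb a x y; have Tlin := Tb.1; apply: opfun_eq => //.
by case: Tlin => _ [+ _]; apply; exact: opfunP.
Qed.

Lemma le_norm_mul (a b M : K) : 0 <= a -> 0 <= b -> a <= M * b -> a <= `|M| * b.
Proof.
move=> a0 b0 aMb; rewrite -(ger0_norm b0) -normrM ger0_norm //.
exact: le_trans aMb.
Qed.

Lemma bounded_op_nonneg T : is_bounded_op T -> exists2 M, 0 <= M & op_bound T M.
Proof.
case=> _ [_ [M TM]]; exists `|M| => // x y Txy.
by apply: le_norm_mul; rewrite ?normr_ge0 ?TM.
Qed.

Lemma bounded_op_of_bound T M : is_linop T -> (forall x, exists y, T x y) ->
  op_bound T M -> is_bounded_op T.
Proof. by move=> Tlin Ttot TM; split=> //; split=> //; exists M. Qed.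

Lemma opsub_bounded_eq S T : is_linop T -> is_bounded_op S -> opsub S T -> S = T.
Proof.
move=> Tlin Sb ST; apply: opeqE => x y; split; first exact: ST.
move=> Txy; rewrite -(opfun_eq Tlin Txy) (opfun_eq Tlin (ST _ _ (opfunP x Sb))).
exact: opfunP.
Qed.

Lemma bounded_op_sup S T : is_linop T -> is_bounded_op S -> opsub S T -> is_bounded_op T.
Proof. by move=> Tlin Sb ST; rewrite -(opsub_bounded_eq Tlin Sb ST). Qed.

Lemma linopB T x1 y1 x2 y2 : is_linop T -> T x1 y1 -> T x2 y2 -> T (x1 - x2) (y1 - y2).
Proof.
case=> _ [Tlin _] T1 T2.
by have := Tlin (-1) _ _ _ _ T2 T1; rewrite !scaleN1r ![- _ + _]addrC.
Qed.

Lemma linop_opadd S T : is_linop S -> is_linop T -> is_linop (opadd S T).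
Proof.
move=> [S00 [Slin S0]] [T00 [Tlin T0]]; split; first by exists 0, 0; rewrite addr0.
split=> [a x1 _ x2 _ [u1 [v1 [Su1 [Tv1 ->]]]] [u2 [v2 [Su2 [Tv2 ->]]]]|y].
  exists (a *: u1 + u2), (a *: v1 + v2); split; first exact: Slin.
  by split; [exact: Tlin|rewrite scalerDr addrACA].
by case=> [u [v [/S0 -> [/T0 -> ->]]]]; rewrite addr0.
Qed.

Lemma linop_opscale (c : K) T : is_linop T -> is_linop (opscale c T).
Proof.
move=> [T00 [Tlin T0]]; split; first by exists 0; rewrite scaler0.
split=> [a x1 _ x2 _ [y1 [Ty1 ->]] [y2 [Ty2 ->]]|y].
  by exists (a *: y1 + y2); split; [exact: Tlin|rewrite scalerDr !scalerA mulrC].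
by case=> [u [/T0 -> ->]]; rewrite scaler0.
Qed.

Lemma linop_opmul S T : is_linop S -> is_linop T -> is_linop (opmul S T).
Proof.
move=> [S00 [Slin S0]] [T00 [Tlin T0]]; split; first by exists 0.
split=> [a x1 z1 x2 z2 [y1 [Ty1 Sz1]] [y2 [Ty2 Sz2]]|z].
  by exists (a *: y1 + y2); split; [exact: Tlin|exact: Slin].
by case=> [y [/T0 -> /S0]].
Qed.

Lemma bounded_opadd S T : is_bounded_op S -> is_bounded_op T -> is_bounded_op (opadd S T).
Proof.
move=> Sb Tb; have [MS _ SM] := bounded_op_nonneg Sb.
have [MT _ TM] := bounded_op_nonneg Tb.
apply: (@bounded_op_of_bound _ (MS + MT)); first exact: linop_opadd Sb.1 Tb.1.
  by move=> x; exists (opfun S x + opfun T x), (opfun S x), (opfun T x);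
    do !split; exact: opfunP.
move=> x _ [y1 [y2 [/SM Sy1 [/TM Ty2 ->]]]]; rewrite mulrDl.
exact: le_trans (ler_normD _ _) (lerD Sy1 Ty2).
Qed.

Lemma bounded_opscale (c : K) T : is_bounded_op T -> is_bounded_op (opscale c T).
Proof.
move=> Tb; have [M M0 TM] := bounded_op_nonneg Tb.
apply: (@bounded_op_of_bound _ (`|c| * M)); first exact: linop_opscale Tb.1.
  by move=> x; exists (c *: opfun T x), (opfun T x); split; first exact: opfunP.
move=> x _ [y [/TM Ty ->]]; rewrite normrZ -mulrA.
by apply: ler_wpM2l.
Qed.

Lemma bounded_opmul S T : is_bounded_op S -> is_bounded_op T -> is_bounded_op (opmul S T).
Proof.
move=> Sb Tb; have [MS MS0 SM] := bounded_op_nonneg Sb.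
have [MT _ TM] := bounded_op_nonneg Tb.
apply: (@bounded_op_of_bound _ (MS * MT)); first exact: linop_opmul Sb.1 Tb.1.
  by move=> x; exists (opfun S (opfun T x)), (opfun T x); split; exact: opfunP.
move=> x z [y [/TM Ty /SM Sz]]; rewrite -mulrA.
by apply: le_trans Sz _; apply: ler_wpM2l.
Qed.

Lemma strong_to_I_opmul A B : (forall n, is_bounded_op (A n)) ->
  (exists M, forall n, op_bound (A n) M) -> strong_to_I A -> strong_to_I B ->
  strong_to_I (fun n => opmul (A n) (B n)).
Proof.
move=> Ab [M AM] As Bs x z ABz.
have [y yP] := choice ABz.
have /cvgrPdist_le yx := Bs x y (fun n => (yP n).1).
have /cvgrPdist_le Ax := As x _ (fun n => opfunP x (Ab n)).
have M1 : 0 < `|M| + 1 by rewrite ltr_pwDr.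
apply/cvgrPdist_le => e e0; near=> n.
have -> : x - z n = (x - opfun (A n) x) + (opfun (A n) x - z n) by rewrite addrA subrK.
rewrite (splitr e); apply: le_trans (ler_normD _ _) _; apply: lerD.
  by near: n; apply: Ax; rewrite divr_gt0.
have /AM Az := linopB (Ab n).1 (opfunP x (Ab n)) (yP n).2.
apply: le_trans (le_norm_mul (normr_ge0 _) (normr_ge0 _) Az) _.
apply: le_trans (_ : (`|M| + 1) * `|x - y n| <= e / 2).
  by apply: ler_wpM2r; rewrite ?lerDl.
rewrite mulrC -ler_pdivlMr //; near: n; apply: yx; rewrite !divr_gt0.
Unshelve. all: by end_near. Qed.

Lemma opclosure_sub S T : opsub S T -> closed (graph T) -> opsub (opclosure S) T.
Proof.
move=> ST /closure_id Tcl x y /(closureS (fun p : X * X => ST p.1 p.2)).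
by rewrite -Tcl.
Qed.

Lemma strong_weak A : strong_to_I A -> weak_to_I A.
Proof. by move=> As phi phic x y Ay; apply: continuous_cvg; [exact: phic|exact: As]. Qed.

End OperatorFacts.

Section WeakLimits.
Context {K : numFieldType}.

Definition weak_lim {Y : normedModType K} (a : nat -> Y) (y : Y) :=
  forall phi : {linear Y -> K^o}, continuous phi -> (fun n => phi (a n)) @ \oo --> phi y.

Definition submod_set {Y : lmodType K} (M : set Y) :=
  M 0 /\ forall (c : K) a b, M a -> M b -> M (c *: a + b).

Lemma weak_lim_pair (Y Z : normedModType K) (a : nat -> Y) (b : nat -> Z) y z :
  weak_lim a y -> weak_lim b z -> weak_lim (fun n => (a n, b n)) (y, z).
Proof.
move=> ay bz phi phic.
have restrict (W : normedModType K) (f : W -> (Y * Z)%type) : linear f -> continuous f ->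
    exists2 psi : {linear W -> K^o}, continuous psi & forall w, psi w = phi (f w).
  move=> fl fc; pose g := phi \o f : W -> K^o.
  have gl : linear g by move=> c u v; rewrite /g /= fl linearP.
  pose psi : {linear W -> K^o} := HB.pack g (GRing.isLinear.Build _ _ _ _ _ gl).
  by exists psi => // w; exact: continuous_comp (fc w) (phic _).
have inl_lin : linear (fun u : Y => (u, 0 : Z)).
  by move=> c u v; apply: injective_projections; rewrite /= ?scaler0 ?addr0.
have inr_lin : linear (fun v : Z => (0 : Y, v)).
  by move=> c u v; apply: injective_projections; rewrite /= ?scaler0 ?addr0.
have [phi1 phi1c phi1E] := restrict _ _ inl_lin (fun u => cvg_pair cvg_id (cvg_cst _)).
have [phi2 phi2c phi2E] := restrict _ _ inr_lin (fun v => cvg_pair (cvg_cst _) cvg_id).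
have phiE u v : phi (u, v) = phi1 u + phi2 v.
  rewrite phi1E phi2E -linearD; congr (phi _).
  by apply: injective_projections; rewrite /= ?addr0 ?add0r.
rewrite phiE; under eq_fun do rewrite phiE.
by apply: cvgD; [exact: ay|exact: bz].
Qed.

Lemma weak_to_I_lim (Y : normedModType K) (A : nat -> op Y) x (y : nat -> Y) :
  weak_to_I A -> (forall n, A n x (y n)) -> weak_lim y x.
Proof. by move=> Aw Ay phi phic; exact: Aw. Qed.

End WeakLimits.
Section HahnBanach.
Variables (R : realType) (V : lmodType R) (p : V -> R).
Hypothesis pD : forall u v, p (u + v) <= p u + p v.
Hypothesis pZ : forall (t : R) v, 0 <= t -> p (t *: v) = t * p v.
Variable v0 : V.

Lemma sublinear0 : p 0 = 0.
Proof. by rewrite -(scale0r 0) pZ // mul0r. Qed.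

Lemma sublinearN v : - p v <= p (- v).
Proof. by rewrite -subr_ge0 opprK addrC -sublinear0 -(subrr v) pD. Qed.

(* Graphs of partial linear functionals below [p]. The base point is only
   required of nonempty graphs, so that [set0], the union of the empty chain,
   qualifies and Zorn's lemma applies. *)
Definition hb_admissible (G : set (V * R)) :=
  [/\ forall a u r v s, G (u, r) -> G (v, s) -> G (a *: u + v, a * r + s),
      forall u r s, G (u, r) -> G (u, s) -> r = s,
      forall u r, G (u, r) -> r <= p u
    & G !=set0 -> G (v0, p v0)].

Lemma admissible_line : hb_admissible [set (t *: v0, t * p v0) | t in setT].
Proof.
split.
- move=> a u r v s [t _ [<- <-]] [t' _ [<- <-]]; exists (a * t + t') => //.
  by rewrite scalerDl scalerA mulrDl mulrA.
- move=> u r s [t _ [<- <-]] [t' _ [/eqP + <-]].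
  rewrite -subr_eq0 -scalerBl scaler_eq0 subr_eq0 => /orP[/eqP -> //|/eqP ->].
  by rewrite sublinear0 !mulr0.
- move=> u r [t _ [<- <-]].
  have [t0|t0] := leP 0 t; first by rewrite pZ.
  rewrite -[t *: v0]opprK -scaleNr -scalerN pZ; last by rewrite oppr_ge0 ltW.
  rewrite mulNr -mulrN.
  by apply: ler_wnM2l; [exact: ltW|rewrite -{2}[v0]opprK sublinearN].
- by move=> _; exists 1; rewrite ?scale1r ?mul1r.
Qed.

Lemma admissible_bigcup (FF : set (set (V * R))) :
  FF `<=` hb_admissible -> total_on FF subset -> hb_admissible (\bigcup_(G in FF) G).
Proof.
move=> FFadm FFtot; split.
- move=> a u r v s [A FA Aur] [B FB Bvs].
  have [AB|BA] := FFtot _ _ FA FB.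
    by exists B => //; have [+ _ _ _] := FFadm _ FB; apply => //; exact: AB.
  by exists A => //; have [+ _ _ _] := FFadm _ FA; apply => //; exact: BA.
- move=> u r s [A FA Aur] [B FB Bus].
  have [AB|BA] := FFtot _ _ FA FB.
    by have [_ + _ _] := FFadm _ FB; apply; [exact: AB Aur|exact: Bus].
  by have [_ + _ _] := FFadm _ FA; apply; [exact: Aur|exact: BA Bus].
- by move=> u r [A FA Aur]; have [_ _ + _] := FFadm _ FA; apply.
- move=> [[u r] [A FA Aur]]; exists A => //.
  by have [_ _ _ +] := FFadm _ FA; apply; exists (u, r).
Qed.

Section OneStepExtension.
Variable A : set (V * R).
Hypotheses (Aadm : hb_admissible A) (A00 : A (0, 0)).
Variable y : V.
Hypothesis Ay : ~ exists r, A (y, r).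

Let Alin a u r v s : A (u, r) -> A (v, s) -> A (a *: u + v, a * r + s).
Proof. by case: Aadm => + _ _ _; apply. Qed.

Let Afun u r s : A (u, r) -> A (u, s) -> r = s.
Proof. by case: Aadm => _ + _ _; apply. Qed.

Let Ale u r : A (u, r) -> r <= p u.
Proof. by case: Aadm => _ _ + _; apply. Qed.

Let AD u r v s : A (u, r) -> A (v, s) -> A (u + v, r + s).
Proof. by move=> h1 h2; have := Alin 1 h1 h2; rewrite scale1r mul1r. Qed.

Let AZ a u r : A (u, r) -> A (a *: u, a * r).
Proof. by move=> h; have := Alin a h A00; rewrite !addr0. Qed.

(* r + s <= p (u + v) <= p (u - y) + p (v + y) separates the two families. *)
Lemma extension_slope : exists c,
  (forall u r, A (u, r) -> r - p (u - y) <= c) /\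
  (forall v s, A (v, s) -> c <= p (v + y) - s).
Proof.
have sep u r v s : A (u, r) -> A (v, s) -> r - p (u - y) <= p (v + y) - s.
  move=> Aur Avs; rewrite lerBrDr addrAC lerBlDr.
  apply: (le_trans (Ale (AD Aur Avs))).
  by rewrite [leRHS]addrC -[u + v]addr0 -(addNr y) addrACA; exact: pD.
pose S := [set z | exists u r, A (u, r) /\ z = r - p (u - y)].
have S0 : S !=set0 by exists (0 - p (0 - y)), 0, 0.
have Sub : has_ubound S by exists (p (0 + y) - 0) => _ [u [r [Aur ->]]]; exact: sep.
exists (sup S); split=> [u r Aur|v s Avs]; first by apply: ub_le_sup => //; exists u, r.
by apply: ge_sup => // _ [u [r [Aur ->]]]; exact: sep.
Qed.

Variable c : R.
Hypothesis c_lb : forall {u r}, A (u, r) -> r - p (u - y) <= c.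
Hypothesis c_ub : forall {v s}, A (v, s) -> c <= p (v + y) - s.

Definition graph_extension : set (V * R) :=
  [set z | exists u r t, A (u, r) /\ z = (u + t *: y, r + t * c)].

Lemma graph_extension_dominated u r t : A (u, r) -> r + t * c <= p (u + t *: y).
Proof.
move=> Aur; have [t0|t0|->] := ltgtP t 0; last by rewrite scale0r mul0r !addr0 Ale.
- have s0 : 0 < - t by rewrite oppr_gt0.
  have := c_lb (AZ (- t)^-1 Aur).
  rewrite -(ler_pM2l s0) mulrBr mulrA mulfV ?gt_eqF // mul1r -pZ; last exact: ltW.
  rewrite scalerBr scalerA mulfV ?gt_eqF // scale1r scaleNr opprK mulNr; lra.
- have := c_ub (AZ t^-1 Aur).
  rewrite -(ler_pM2l t0) mulrBr mulrA mulfV ?gt_eqF // mul1r -pZ; last exact: ltW.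
  rewrite scalerDr scalerA mulfV ?gt_eqF // scale1r; lra.
Qed.

Lemma admissible_graph_extension : hb_admissible graph_extension.
Proof.
split.
- move=> a _ _ _ _ [u [r [t [Aur [-> ->]]]]] [v [s [t' [Avs [-> ->]]]]].
  exists (a *: u + v), (a * r + s), (a * t + t'); split; first exact: Alin.
  congr pair; last by ring.
  by rewrite scalerDr scalerA scalerDl !addrA; congr (_ + _); rewrite addrAC.
- move=> _ _ _ [u [r [t [Aur [-> ->]]]]] [v [s [t' [Avs [+ ->]]]]].
  have [<- /addIr uv|tt' uvy] := eqVneq t t'.
    by rewrite uv in Aur *; rewrite (Afun Aur Avs).
  exfalso; apply: Ay; exists ((t - t')^-1 * (s - r)).
  have vu : (t - t') *: y = v - u.
    by apply/eqP; rewrite scalerBl subr_eq addrAC eq_sym subr_eq -uvy addrC.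
  have -> : y = (t - t')^-1 *: (v - u) by rewrite -vu scalerA mulVf ?scale1r ?subr_eq0.
  by apply: AZ; apply: AD Avs _; have := AZ (-1) Aur; rewrite scaleN1r mulN1r.
- by move=> _ _ [u [r [t [Aur [-> ->]]]]]; exact: graph_extension_dominated.
- move=> _; exists v0, (p v0), 0; rewrite scale0r mul0r !addr0; split => //.
  by have [_ _ _ +] := Aadm; apply; exists (0, 0).
Qed.

Lemma sub_graph_extension : A `<=` graph_extension.
Proof. by move=> [u r] Aur; exists u, r, 0; rewrite scale0r mul0r !addr0. Qed.

Lemma graph_extension_point : graph_extension (y, c).
Proof. by exists 0, 0, 1; rewrite scale1r mul1r !add0r. Qed.

End OneStepExtension.

Theorem hahn_banach : exists F : {linear V -> R^o},
  (forall v, F v <= p v) /\ F v0 = p v0.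
Proof.
have [A [Aadm Amax]] := Zorn_bigcup admissible_bigcup.
have [Alin Afun Ale Abase] := Aadm.
have A00 : A (0, 0).
  have [[[u r] Aur]|A0] := pselect (A !=set0).
    by have := Alin (-1) _ _ _ _ Aur Aur; rewrite scaleN1r mulN1r !addNr.
  exfalso; apply: (Amax _ _ admissible_line).
  split=> [z Az|/(_ (0, 0)) lineA]; case: A0; first by exists z.
  by exists (0, 0); apply: lineA; exists 0; rewrite ?scale0r ?mul0r.
have Atot y : exists r, A (y, r).
  apply: contrapT => Ay; have [c [c_lb c_ub]] := extension_slope Aadm A00 y.
  apply: (Amax _ _ (admissible_graph_extension Aadm A00 Ay c_lb c_ub)); split.
    exact: sub_graph_extension.
  by move/(_ (y, c) (graph_extension_point A00 y c)) => Ayc; apply: Ay; exists c.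
have [F AF] := choice Atot.
have Flin : linear (F : V -> R^o).
  by move=> a u v; apply: Afun (AF _) (Alin _ _ _ _ _ (AF u) (AF v)).
pose Fl : {linear V -> R^o} := HB.pack (F : V -> R^o) (GRing.isLinear.Build _ _ _ _ _ Flin).
exists Fl; split=> [v|]; first exact: Ale (AF v).
by apply: Afun (AF v0) (Abase _); exists (v0, F v0).
Qed.

End HahnBanach.


Section Realify.
Variables (R : realType) (Y : normedModType R[i]).

Lemma normc_real (y : Y) : (complex.Re `|y|)%:C = `|y|.
Proof. exact/RRe_real/ger0_real. Qed.

Definition realify : Type := Y.
HB.instance Definition _ := GRing.Zmodule.on realify.

Definition realify_scale (r : R) (y : realify) : realify := r%:C *: (y : Y).

Lemma realify_scaleA a b y : realify_scale a (realify_scale b y) = realify_scale (a * b) y.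
Proof. by rewrite /realify_scale scalerA -rmorphM. Qed.

Lemma realify_scale1 : left_id 1 realify_scale.
Proof. by move=> y; rewrite /realify_scale rmorph1 scale1r. Qed.

Lemma realify_scaleDr : right_distributive realify_scale +%R.
Proof. by move=> a u v; rewrite /realify_scale scalerDr. Qed.

Lemma realify_scaleDl y : {morph realify_scale^~ y : a b / a + b}.
Proof. by move=> a b; rewrite /realify_scale rmorphD scalerDl. Qed.

HB.instance Definition _ := GRing.Zmodule_isLmodule.Build R realify
  realify_scaleA realify_scale1 realify_scaleDr realify_scaleDl.

Definition realify_norm (y : realify) : R := complex.Re `|y : Y|.

Lemma realify_normD x y : realify_norm (x + y) <= realify_norm x + realify_norm y.
Proof.
have := ler_normD (x : Y) y; rewrite -(normc_real (x + y : Y)).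
by rewrite -(normc_real (x : Y)) -(normc_real (y : Y)) -rmorphD lecR.
Qed.

Lemma realify_normZ (l : R) y : realify_norm (l *: y) = `|l| * realify_norm y.
Proof.
apply: complexI; rewrite (normc_real (l%:C *: (y : Y))) normrZ -(normc_real (y : Y)).
by rewrite normc_def /= expr0n addr0 sqrtr_sqr -rmorphM.
Qed.

Lemma realify_norm0_eq0 y : realify_norm y = 0 -> y = 0.
Proof.
by move=> y0; apply/eqP; rewrite -(@normr_eq0 _ Y) -normc_real -/(realify_norm y) y0.
Qed.

HB.instance Definition _ := Lmodule_isNormed.Build R realify
  realify_normD realify_normZ realify_norm0_eq0.

Lemma realify_normE (y : Y) : `|y : realify|%:C = `|y|.
Proof. exact: normc_real. Qed.

Lemma realify_ball (x y : Y) (e : R) : ball (x : realify) e y <-> ball x e%:C y.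
Proof. by rewrite -!ball_normE /ball_ /= -realify_normE ltcR. Qed.

End Realify.

Lemma realify_complete (R : realType) (X : completeNormedModType R[i])
    (F : set_system (realify X)) :
  ProperFilter F -> cauchy F -> cvg F.
Proof.
move=> FF /cauchy_ballP FC; have FFX : ProperFilter (F : set_system X) := FF.
have /cvg_ex[l Fl] : cvg (F : set_system X).
  apply: cauchy_cvg; apply/cauchy_ballP => e e0.
  have ge0 : 0 < complex.Re e by move: e0; rewrite ltcE => /andP[].
  apply: filterS (FC _ ge0) => -[a b] /=.
  by rewrite realify_ball (RRe_real (gtr0_real e0)).
apply/cvg_ex; exists (l : realify X); apply/fcvg_ballP => e e0.
have /fcvg_ballP/(_ e%:C) := Fl; rewrite ltcR => /(_ e0).
by apply: filterS => z /realify_ball.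
Qed.

HB.instance Definition _ (R : realType) (X : completeNormedModType R[i]) :=
  Uniform_isComplete.Build (realify X) (@realify_complete R X).


Section Separation.
Variables (R : realType) (Y : normedModType R[i]).
Local Notation nR y := (`|(y : realify Y)| : R).

Lemma complexify (F : {linear realify Y -> R^o}) : (forall y, `|F y| <= nR y) ->
  exists2 phi : {linear Y -> R[i]^o}, continuous phi &
    forall y, phi y = F y +i* (- F ('i *: y)).
Proof.
move=> Fle; pose phi (y : Y) : R[i]^o := F y +i* (- F ('i *: y)).
have FZ (a : R) y : F (a%:C *: y) = a * F y.
  by rewrite -[a%:C *: y]/(a *: (y : realify Y)) linearZ.
have FD (u v : Y) : F (u + v) = F u + F v by rewrite linearD.
have phil : linear phi.
  move=> [a b] u v; rewrite /phi.
  have -> : (a +i* b) *: u = a%:C *: u + b%:C *: ('i *: u).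
    rewrite scalerA -scalerDl; congr (_ *: _).
    by apply/eqP; rewrite eq_complex /=; apply/andP; split; apply/eqP; ring.
  have -> : 'i *: (a%:C *: u + b%:C *: ('i *: u) + v) =
      a%:C *: ('i *: u) + (- b)%:C *: u + 'i *: v.
    rewrite !scalerDr !scalerA; congr (_ + _ + _); congr (_ *: _); first exact: mulrC.
    by rewrite mulrAC -expr2 sqr_i mulN1r rmorphN.
  rewrite !FD !FZ; apply/eqP; rewrite eq_complex /=.
  by apply/andP; split; apply/eqP; ring.
pose phiL : {linear Y -> R[i]^o} := HB.pack phi (GRing.isLinear.Build _ _ _ _ _ phil).
exists phiL => //; apply: bounded_linear_continuous; apply/linear_boundedP.
exists 2; split=> [|r r2 y]; first by rewrite realE ler0n.
apply: le_trans (_ : `|phi y| <= 2 * `|y|) _; last by rewrite ler_wpM2r // ltW.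
have Fi : `|F ('i *: y)| <= nR y.
  apply: le_trans (Fle _) _; rewrite -lecR !realify_normE normrZ.
  by rewrite normc_def /= expr0n expr1n add0r sqrtr1 rmorph1 mul1r.
have := Fle y; have := Fi; rewrite !ler_norml => /andP[? ?] /andP[? ?].
rewrite normc_def /= -(normc_real y) -(rmorph_nat (real_complex R) 2) -rmorphM lecR.
have ny : 0 <= nR y := normr_ge0 (y : realify Y).
apply: le_trans (_ : _ <= Num.sqrt ((2 * nR y) ^+ 2)) _; first by apply: ler_wsqrtr; nra.
by rewrite sqrtr_sqr ger0_norm ?mulr_ge0.
Qed.

Variable M : set Y.
Hypothesis Msub : submod_set M.

Let MD a b : M a -> M b -> M (a + b).
Proof. by move=> Ma Mb; have := Msub.2 1 _ _ Ma Mb; rewrite scale1r. Qed.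

Let MZ (c : R[i]) a : M a -> M (c *: a).
Proof. by move=> Ma; have := Msub.2 c _ _ Ma Msub.1; rewrite addr0. Qed.

Definition dist_to (y : realify Y) : R := inf [set nR (y - m) | m in M].

Let dist_set_lbound y : has_lbound [set nR (y - m) | m in M].
Proof. by exists 0 => _ [m _ <-]; exact: normr_ge0. Qed.

Lemma dist_to_le y m : M m -> dist_to y <= nR (y - m).
Proof. by move=> Mm; apply: ge_inf; [exact: dist_set_lbound|exists m]. Qed.

Lemma dist_to_glb y c : (forall m, M m -> c <= nR (y - m)) -> c <= dist_to y.
Proof.
move=> h; apply: lb_le_inf => [|_ [m Mm <-]]; last exact: h.
by exists (nR (y - 0)), 0 => //; exact: Msub.1.
Qed.

Lemma dist_to_ge0 y : 0 <= dist_to y.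
Proof. by apply: dist_to_glb => m _; exact: normr_ge0. Qed.

Lemma dist_toD u v : dist_to (u + v) <= dist_to u + dist_to v.
Proof.
have uv a b : M a -> M b -> dist_to (u + v) <= nR (u - a) + nR (v - b).
  move=> Ma Mb; apply: le_trans (dist_to_le _ (MD Ma Mb)) _.
  by rewrite opprD addrACA; exact: ler_normD.
rewrite -lerBlDr; apply: dist_to_glb => a Ma.
suff : dist_to (u + v) - nR (u - a) <= dist_to v by lra.
by apply: dist_to_glb => b Mb; have := uv a b Ma Mb; lra.
Qed.

Lemma dist_to_mem m : M m -> dist_to m = 0.
Proof.
move=> Mm; apply/eqP; rewrite eq_le dist_to_ge0 andbT.
by apply: le_trans (dist_to_le _ Mm) _; rewrite subrr normr0.
Qed.

Let dist_toZ_le (t : R) y : 0 < t -> dist_to (t *: y) <= t * dist_to y.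
Proof.
move=> t0; rewrite mulrC -ler_pdivrMr //; apply: dist_to_glb => m Mm.
rewrite ler_pdivrMr // mulrC; apply: le_trans (dist_to_le _ (MZ t%:C Mm)) _.
by rewrite -[t%:C *: m]/(t *: (m : realify Y)) -scalerBr normrZ gtr0_norm.
Qed.

Lemma dist_toZ (t : R) y : 0 <= t -> dist_to (t *: y) = t * dist_to y.
Proof.
rewrite le_eqVlt => /orP[/eqP <-|t0].
  by rewrite scale0r mul0r dist_to_mem //; exact: Msub.1.
apply/eqP; rewrite eq_le dist_toZ_le //= -ler_pdivlMl //.
have := @dist_toZ_le t^-1 (t *: y).
by rewrite invr_gt0 scalerA mulVf ?gt_eqF // scale1r => /(_ t0).
Qed.

Lemma dist_to_le_norm y : dist_to y <= nR y.
Proof. by apply: le_trans (dist_to_le _ Msub.1) _; rewrite subr0. Qed.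

Lemma not_closure_dist_to z : ~ closure M z -> 0 < dist_to z.
Proof.
rewrite /closure => /existsNP[B /not_implyP[zB /set0P/negP/negbNE/eqP MB0]].
have [e e0 eB] := (nbhs_ballP z B).1 zB.
have {}e0 : 0 < e := e0.
apply: lt_le_trans (_ : 0 < complex.Re e) _; first by move: e0; rewrite ltcE => /andP[].
apply: dist_to_glb => m Mm; rewrite leNgt; apply/negP => zm.
suff : (M `&` B) m by rewrite MB0.
split=> //; apply: eB; rewrite -(RRe_real (gtr0_real e0)) -realify_ball.
by rewrite -ball_normE.
Qed.

(* Hahn-Banach against the distance to [M], then complexification. *)
Theorem separation z : ~ closure M z ->
  exists2 phi : {linear Y -> R[i]^o}, continuous phi &
    (forall m, M m -> phi m = 0) /\ phi z != 0.
Proof.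
move=> /not_closure_dist_to dz.
have [F [Fd Fz]] := hahn_banach dist_toD dist_toZ z.
have FM m : M m -> F m = 0.
  move=> Mm; apply/eqP; rewrite eq_le -{1}(dist_to_mem Mm) Fd /= -oppr_le0 -linearN.
  by rewrite -(dist_to_mem (MZ (-1) Mm)) scaleN1r Fd.
have Fle y : `|F y| <= nR y.
  rewrite ler_norml (le_trans (Fd y) (dist_to_le_norm y)) andbT lerNl -linearN.
  by apply: le_trans (Fd _) _; apply: le_trans (dist_to_le_norm _) _; rewrite normrN.
have [phi phic phiE] := complexify Fle.
exists phi => //; split=> [m Mm|]; first by rewrite phiE FM ?FM ?oppr0 //; exact: MZ.
rewrite phiE; apply/negP => /eqP/(congr1 (@complex.Re R)) /= Fz0.
by move: dz; rewrite -Fz Fz0 ltxx.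
Qed.

End Separation.

Lemma closure_weak_lim (R : realType) (Y : normedModType R[i]) (M : set Y)
    (a : nat -> Y) y :
  submod_set M -> (forall n, M (a n)) -> weak_lim a y -> closure M y.
Proof.
move=> Msub Ma ay; apply: contrapT => /(separation Msub)[phi phic [phiM /eqP]]; apply.
have := ay phi phic; under eq_fun do rewrite phiM //.
by move=> h; apply: (@cvg_unique _ (@norm_hausdorff _ R[i]^o) _ _ _ _ h); exact: cvg_cst.
Qed.

Lemma linop_graph_submod (K : numFieldType) (X : normedModType K) (T : op X) :
  is_linop T -> submod_set (graph T).
Proof.
case=> T00 [Tlin _]; split=> // c [a1 b1] [a2 b2] /= T1 T2.
exact: Tlin T1 T2.
Qed.

Lemma opclosure_weak_lim (R : realType) (X : normedModType R[i]) (T : op X)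
    (a b : nat -> X) x y :
  is_linop T -> (forall n, T (a n) (b n)) -> weak_lim a x -> weak_lim b y ->
  opclosure T x y.
Proof.
move=> Tlin Tab ax b_y.
exact: (@closure_weak_lim _ _ (graph T) (fun n => (a n, b n)) (x, y))
  (linop_graph_submod Tlin) Tab (weak_lim_pair ax b_y).
Qed.

Lemma linear_unit_ball_bound (K : numFieldType) (V W : normedModType K)
    (f : {linear V -> W}) (M : K) :
  (forall x, `|x| <= 1 -> `|f x| <= M) -> forall x, `|f x| <= M * `|x|.
Proof.
move=> fM x; have [->|x0] := eqVneq x 0; first by rewrite linear0 !normr0 mulr0.
have nx : 0 < `|x| by rewrite normr_gt0.
have := fM (`|x|^-1 *: x); rewrite linearZ !normrZ ger0_norm ?invr_ge0 ?normr_ge0 //.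
by rewrite mulVf ?gt_eqF // mulrC ler_pdivrMr // => /(_ (lexx _)).
Qed.

Lemma realify_le (R : realType) (Y Z : normedModType R[i]) (y : Y) (z : Z) (c : R) :
  (`|y : realify Y| <= c * `|z : realify Z|) = (`|y| <= c%:C * `|z|).
Proof. by rewrite -(realify_normE y) -(realify_normE z) -rmorphM lecR. Qed.

Theorem uniform_boundedness (R : realType) (X : completeNormedModType R[i])
    (Y : normedModType R[i]) (I : Type) (A : I -> X -> Y) :
  (forall i, linear (A i)) ->
  (forall i, exists M, forall x, `|A i x| <= M * `|x|) ->
  (forall x, exists M, forall i, `|A i x| <= M) ->
  exists M, forall i x, `|A i x| <= M * `|x|.
Proof.
move=> Alin Abd Apw.
have AlinR i : linear (A i : realify X -> realify Y) by move=> a; exact: Alin.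
pose Al i : {linear realify X -> realify Y} :=
  HB.pack (A i : realify X -> realify Y) (GRing.isLinear.Build _ _ _ _ _ (AlinR i)).
have AlR i : exists M : R, forall x : X, `|A i x : realify Y| <= M * `|x : realify X|.
  have [M AM] := Abd i; exists (complex.Re `|M|) => x.
  rewrite realify_le (RRe_real (ger0_real (normr_ge0 M))).
  by apply: le_norm_mul; rewrite ?normr_ge0 ?AM.
have /(_ 1)[M1 AM1] : uniform_bounded [set (Al i : realify X -> realify Y) | i in setT].
  apply: Banach_Steinhauss => [_ [i _ <-]|x].
    split=> [r|]; last exact: AlinR.
    have [M AM] := AlR i; exists (`|M| * r) => x xr.
    apply: le_trans (AM x) _; apply: le_trans (ler_norm _) _.
    by rewrite normrM normr_id ler_wpM2l.
  have [M AM] := Apw x; exists (complex.Re M) => _ [i _ <-].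
  by have := AM i; rewrite lecE => /andP[].
exists M1%:C => i x; rewrite -realify_le.
have Ai : [set (Al j : realify X -> realify Y) | j in setT] (Al i) by exists i.
by apply: (@linear_unit_ball_bound _ _ _ (Al i)) => y; exact: AM1 Ai y.
Qed.

Lemma strong_to_I_uniform_bound (R : realType) (X : completeNormedModType R[i])
    (A : nat -> op X) :
  (forall n, is_bounded_op (A n)) -> strong_to_I A -> exists M, forall n, op_bound (A n) M.
Proof.
move=> Ab As.
have [M AM] : exists M, forall n x, `|opfun (A n) x| <= M * `|x|.
  apply: uniform_boundedness => [n|n|x]; first exact: opfun_linear.
    by have [M _ AM] := bounded_op_nonneg (Ab n); exists M => x; apply: AM; exact: opfunP.
  have /cvgP/cvg_seq_bounded[B [_ AB]] := As x _ (fun n => opfunP x (Ab n)).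
  by exists (B + 1) => n; apply: (AB (B + 1)); rewrite ?ltrDl //; exists n.
by exists M => n x y /(opfun_eq (Ab n).1) <-.
Qed.

Section ProtoCalculus.
Variables (R : realType) (X : completeNormedModType R[i]) (F : comAlgType R[i]).
Variable Phi : F -> op X.
Hypothesis HPhi : proto_calculus Phi.

Let Phi_linop f : is_linop (Phi f).
Proof. by case: HPhi => /(_ f)[]. Qed.

Let Phi_closed f : closed (graph (Phi f)).
Proof. by case: HPhi => /(_ f)[]. Qed.

Let Phi_fun f x y1 y2 : Phi f x y1 -> Phi f x y2 -> y1 = y2.
Proof. exact: linop_fun. Qed.

Let Phi_opscale (a : R[i]) f : opsub (opscale a (Phi f)) (Phi (a *: f)).
Proof. by case: HPhi => _ [_ [+ _]]. Qed.

Let Phi_opadd f g : opsub (opadd (Phi f) (Phi g)) (Phi (f + g)).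
Proof. by case: HPhi => _ [_ [_ [+ _]]]. Qed.

Let Phi_opmul f g : opsub (opmul (Phi f) (Phi g)) (Phi (f * g)).
Proof. by case: HPhi => _ [_ [_ [_ /(_ f g)[]]]]. Qed.

Let PhiZ (a : R[i]) f x y : Phi f x y -> Phi (a *: f) x (a *: y).
Proof. by move=> fxy; apply: Phi_opscale; exists y. Qed.

Let PhiD f g x y z : Phi f x y -> Phi g x z -> Phi (f + g) x (y + z).
Proof. by move=> fxy gxz; apply: Phi_opadd; exists y, z. Qed.

Let PhiM f g x y z : Phi g x y -> Phi f y z -> Phi (f * g) x z.
Proof. by move=> gxy fyz; apply: Phi_opmul; exists y. Qed.

Definition factors_through (e : nat -> F) (S : op X) (h : F) :=
  forall n x, exists w y, [/\ Phi (e n) x w, S w y & Phi (h * e n) x y].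

Lemma ai_for_cond_factors e h : ai_for_cond Phi e h -> factors_through e (Phi h) h.
Proof.
move=> eh n x; have [_ [/opeqE ehE ehb]] := eh n.
have [w [ew hw]] : opmul (Phi h) (Phi (e n)) x (opfun (Phi (h * e n)) x).
  by rewrite ehE; exact: opfunP.
by exists w, (opfun (Phi (h * e n)) x); split=> //; exact: opfunP.
Qed.

Lemma factors_ai_for_cond e h : factors_through e (Phi h) h ->
  (forall n, is_bounded_op (Phi (h * e n))) -> ai_for_cond Phi e h.
Proof.
move=> eh ehb n; split; [|split] => //.
- move=> x z [y [hy ez]]; have [w [y' [ew hw ehy']]] := eh n x.
  exists w; split=> //; have := PhiM hy ez; rewrite mulrC => ehz.
  by rewrite (Phi_fun ehz ehy').
- move=> x y; split; first by case=> w [ew hw]; exact: PhiM ew hw.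
  move=> ehy; have [w [y' [ew hw ehy']]] := eh n x.
  by exists w; rewrite (Phi_fun ehy ehy').
Qed.

Lemma factors_through_sub e S T h : opsub S T ->
  factors_through e S h -> factors_through e T h.
Proof.
move=> ST eS n x; have [w [y [ew Swy ehy]]] := eS n x.
by exists w, y; split=> //; exact: ST.
Qed.

Lemma factors_through_add e f g :
  factors_through e (Phi f) f -> factors_through e (Phi g) g ->
  factors_through e (opadd (Phi f) (Phi g)) (f + g).
Proof.
move=> ef eg n x; have [w [yf [ew fw efy]]] := ef n x.
have [w' [yg [ew' gw' egy]]] := eg n x; rewrite -(Phi_fun ew ew') in gw'.
exists w, (yf + yg); split=> //; first by exists yf, yg.
by rewrite mulrDl; exact: PhiD.
Qed.

Lemma factors_through_scale e (a : R[i]) f :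
  factors_through e (Phi f) f -> factors_through e (Phi (a *: f)) (a *: f).
Proof.
move=> ef n x; have [w [y [ew fw efy]]] := ef n x.
by exists w, (a *: y); split=> //; rewrite -?scalerAl; exact: PhiZ.
Qed.

Lemma factors_through_mul e f g : ai_for_cond Phi e f -> ai_for_cond Phi e g ->
  factors_through (fun n => e n ^+ 2) (opmul (Phi f) (Phi g)) (f * g).
Proof.
move=> ef eg n x; have [w1 [u [ew1 gu egu]]] := ai_for_cond_factors eg n x.
have [v [r [euv fvr efr]]] := ai_for_cond_factors ef n u.
have [w2 [ew2 gv]] : opmul (Phi g) (Phi (e n)) w1 v.
  by case: (eg n) => + _; apply; exists u.
exists w2, r; split; first by rewrite expr2; exact: PhiM ew1 ew2.
  by exists v.
by have := PhiM egu efr; rewrite expr2 mulrACA.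
Qed.

Lemma ai_for_cond_add e f g : ai_for_cond Phi e f -> ai_for_cond Phi e g ->
  ai_for_cond Phi e (f + g).
Proof.
move=> ef eg; apply: factors_ai_for_cond => [|n].
  apply: factors_through_sub (@Phi_opadd f g) _.
  exact: factors_through_add (ai_for_cond_factors ef) (ai_for_cond_factors eg).
have [_ [_ efb]] := ef n; have [_ [_ egb]] := eg n.
apply: bounded_op_sup (Phi_linop _) (bounded_opadd efb egb) _.
by rewrite mulrDl; exact: Phi_opadd.
Qed.

Lemma ai_for_cond_scale e (a : R[i]) f : ai_for_cond Phi e f -> ai_for_cond Phi e (a *: f).
Proof.
move=> ef; apply: factors_ai_for_cond => [|n].
  exact: factors_through_scale (ai_for_cond_factors ef).
have [_ [_ efb]] := ef n.
apply: bounded_op_sup (Phi_linop _) (bounded_opscale a efb) _.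
by rewrite -scalerAl; exact: Phi_opscale.
Qed.

Lemma ai_for_cond_mul e f g : ai_for_cond Phi e f -> ai_for_cond Phi e g ->
  ai_for_cond Phi (fun n => e n ^+ 2) (f * g).
Proof.
move=> ef eg; apply: factors_ai_for_cond => [|n].
  exact: factors_through_sub (@Phi_opmul f g) (factors_through_mul ef eg).
have [_ [_ efb]] := ef n; have [_ [_ egb]] := eg n.
apply: bounded_op_sup (Phi_linop _) (bounded_opmul efb egb) _.
by rewrite expr2 mulrACA; exact: Phi_opmul.
Qed.

Lemma approx_identity_sq e : approx_identity Phi e ->
  approx_identity Phi (fun n => e n ^+ 2).
Proof.
move=> [eb es].
have eE n : opmul (Phi (e n)) (Phi (e n)) = Phi (e n ^+ 2).
  apply: opsub_bounded_eq (Phi_linop _) (bounded_opmul (eb n) (eb n)) _.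
  by rewrite expr2; exact: Phi_opmul.
split=> [n|]; first by rewrite -eE; exact: bounded_opmul.
have := strong_to_I_opmul eb (strong_to_I_uniform_bound eb es) es es.
by rewrite (_ : (fun n => opmul _ _) = fun n => Phi (e n ^+ 2)) //; apply/funext => n.
Qed.

Lemma approx_identity_weak e : approx_identity Phi e -> weak_approx_identity Phi e.
Proof. by case=> eb es; split=> //; exact: strong_weak. Qed.

(* [Phi (e n)] maps the graph of [Phi h] into that of [S]; let [n] go to infinity. *)
Lemma opclosure_factors e S h : weak_approx_identity Phi e -> ai_for_cond Phi e h ->
  is_linop S -> opsub S (Phi h) -> factors_through e S h -> opeq (opclosure S) (Phi h).
Proof.
move=> [eb ew] eh Slin Sh eS x y; have Scl := opclosure_sub Sh (@Phi_closed h).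
split; first exact: Scl.
move=> hxy; pose xs n := opfun (Phi (e n)) x; pose ys n := opfun (Phi (e n)) y.
apply: (@opclosure_weak_lim _ _ _ xs ys) => //; last 2 first.
- exact: weak_to_I_lim ew (fun n => opfunP x (eb n)).
- exact: weak_to_I_lim ew (fun n => opfunP y (eb n)).
move=> n; have [w [y' [ew' Swy ehy]]] := eS n x.
have [comm [/opeqE ehE _]] := eh n.
have : Phi (h * e n) x (ys n).
  by rewrite -ehE; apply: comm; exists y; split=> //; exact: opfunP.
by move=> /(Phi_fun ehy) <-; rewrite /xs (opfun_eq (Phi_linop _) ew').
Qed.

Lemma opclosure_opadd e f g : weak_approx_identity Phi e ->
  ai_for_cond Phi e f -> ai_for_cond Phi e g ->
  opeq (opclosure (opadd (Phi f) (Phi g))) (Phi (f + g)).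
Proof.
move=> eW ef eg; apply: (opclosure_factors eW (ai_for_cond_add ef eg)).
- exact: linop_opadd.
- exact: Phi_opadd.
- exact: factors_through_add (ai_for_cond_factors ef) (ai_for_cond_factors eg).
Qed.

Lemma opclosure_opmul e f g : approx_identity Phi e ->
  ai_for_cond Phi e f -> ai_for_cond Phi e g ->
  opeq (opclosure (opmul (Phi f) (Phi g))) (Phi (f * g)).
Proof.
move=> eA ef eg.
have e2W := approx_identity_weak (approx_identity_sq eA).
apply: (opclosure_factors e2W (ai_for_cond_mul ef eg)).
- exact: linop_opmul.
- exact: Phi_opmul.
- exact: factors_through_mul.
Qed.

End ProtoCalculus.

Theorem theorem7p2 (R : realType) (X : completeNormedModType R[i])
  (F : comAlgType R[i]) (Phi : F -> op X) :
  proto_calculus Phi ->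
  (* (a), strong version *)
  (forall (e : nat -> F) (f g : F),
     approx_identity_for Phi e f -> approx_identity_for Phi e g ->
     approx_identity_for Phi e (f + g) /\
     (forall l : R[i], approx_identity_for Phi e (l *: f)) /\
     opeq (opclosure (opadd (Phi f) (Phi g))) (Phi (f + g))) /\
  (* (a), weak version *)
  (forall (e : nat -> F) (f g : F),
     weak_approx_identity_for Phi e f -> weak_approx_identity_for Phi e g ->
     weak_approx_identity_for Phi e (f + g) /\
     (forall l : R[i], weak_approx_identity_for Phi e (l *: f)) /\
     opeq (opclosure (opadd (Phi f) (Phi g))) (Phi (f + g))) /\
  (* (b) *)
  (forall (e : nat -> F) (f g : F),
     approx_identity_for Phi e f -> approx_identity_for Phi e g ->
     approx_identity_for Phi (fun n => e n ^+ 2) (f * g) /\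
     opeq (opclosure (opmul (Phi f) (Phi g))) (Phi (f * g))).
Proof.
move=> HPhi; split; [|split] => e f g.
- move=> [eA ef] [_ eg]; split; first by split; [|exact: ai_for_cond_add].
  split=> [l|]; first by split; [|exact: ai_for_cond_scale].
  exact (opclosure_opadd HPhi (approx_identity_weak eA) ef eg).
- move=> [eW ef] [_ eg]; split; first by split; [|exact: ai_for_cond_add].
  split=> [l|]; first by split; [|exact: ai_for_cond_scale].
  exact (opclosure_opadd HPhi eW ef eg).
- move=> [eA ef] [_ eg]; split; last exact (opclosure_opmul HPhi eA ef eg).
  by split; [exact: approx_identity_sq|exact: ai_for_cond_mul].
Qed.
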